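(* There is no class $\mathcal C$ of pWF nets satisfying all three of the following: (1) every sub-sound pWF net belongs to $\mathcal C$, and $\mathcal C$ contains at least one pWF net that is not sub-sound; (2) every net in $\mathcal C$ is $1$-sound; (3) $\mathcal C$ is preserved by substitution, i.e. whenever $N,M\in\mathcal C$ have disjoint node sets and $p$ is a place of $N$, then $N\otimes_p M\in\mathcal C$.
   Context: Petri nets and markings. A Petri net is a triple $(P,T,F)$ with $P$ a finite set of places, $T$ a finite set of transitions, $P\cap T=\emptyset$, and $F\subseteq (P\times T)\cup(T\times P)$. For a node $x$, $\bullet x=\{y\mid (y,x)\in F\}$, $x\bullet=\{y\mid (x,y)\in F\}$. A marking is a multiset over $P$ (a function $P\to\mathbb N$); sets of places are identified with bags of multiplicity one, $+,-,\le$ are pointwise, and $k.m$ is the sum of $k$ copies of $m$. Transition $t$ is enabled at $m$ iff $\bullet t\le m$, firing gives $m-\bullet t+t\bullet$, and $m\xrightarrow{*}m'$ denotes reachability by a finite (possibly empty) firing sequence. A pWF net is $(P,T,F,I,O)$ with $(P,T,F)$ a Petri net, $I,O\subseteq P$ non-empty (input/output places), every node reachable by a directed path from some node of $I$, and some node of $O$ reachable from every node; input places may have incoming edges and output places outgoing edges. Soundness. A pWF net is $k$-sound if for every marking $m$ with $k.I\xrightarrow{*}m$ we have $m\xrightarrow{*}k.O$. It is substitution-sound (sub-sound) if for all integers $k\ge k'\ge 0$ and every marking $m'$: if $k.I\xrightarrow{*}m'+k'.O$ then $m'\xrightarrow{*}(k-k').O$. Place substitution. For pWF nets $N=(P,T,F,I,O)$,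 $M=(P',T',F',I',O')$ with disjoint node sets and $p\in P$, $N\otimes_p M$ is obtained from $N$ by deleting $p$ and all edges incident to $p$, adding all nodes and edges of $M$, adding an edge $(t,p')$ for each $t\in\bullet_N p$ and $p'\in I'$, and an edge $(p',t)$ for each $p'\in O'$ and $t\in p\bullet_N$; its input set is $(I\setminus\{p\})\cup I'$ if $p\in I$ and $I$ otherwise, and its output set is $(O\setminus\{p\})\cup O'$ if $p\in O$ and $O$ otherwise. *)

(* Nodes of nets are drawn from the common universe nat
   (so "disjoint node sets" makes sense); sets of nodes / the flow relation
   are boolean predicates (finite, see [finite_net]). *)
From Stdlib Require Import Arith Bool Relations.

Record net := Net {
  pl   : nat -> bool;
  tr   : nat -> bool;
  fl   : nat -> nat -> bool;
  inp  : nat -> bool;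
  outp : nat -> bool
}.

Definition node (N : net) (x : nat) : bool := pl N x || tr N x.

Definition pWF (N : net) : Prop :=
  (exists b, forall x, node N x = true -> x < b) /\
  (forall x, ~ (pl N x = true /\ tr N x = true)) /\
  (forall x y, fl N x y = true ->
      (pl N x = true /\ tr N y = true) \/ (tr N x = true /\ pl N y = true)) /\
  (forall x, inp N x = true -> pl N x = true) /\
  (forall x, outp N x = true -> pl N x = true) /\
  (exists i, inp N i = true) /\
  (exists o, outp N o = true) /\
  (forall x, node N x = true ->
     exists i, inp N i = true /\ clos_refl_trans nat (fun a b => fl N a b = true) i x) /\
  (forall x, node N x = true ->
     exists o, outp N o = true /\ clos_refl_trans nat (fun a b => fl N a b = true) x o).

Definition marking := nat -> nat.

Definition madd (m1 m2 : marking) : marking := fun p => m1 p + m2 p.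

Definition mscale (k : nat) (S : nat -> bool) : marking :=
  fun p => if S p then k else 0.

Definition enabled (N : net) (t : nat) (m : marking) : Prop :=
  tr N t = true /\ forall p, fl N p t = true -> 1 <= m p.

Definition fire (N : net) (t : nat) (m : marking) : marking :=
  fun p => m p - (if fl N p t then 1 else 0) + (if fl N t p then 1 else 0).

Definition step (N : net) (m m' : marking) : Prop :=
  exists t, enabled N t m /\ m' = fire N t m.

Definition reach (N : net) : marking -> marking -> Prop :=
  clos_refl_trans marking (step N).

Definition ksound (k : nat) (N : net) : Prop :=
  forall m, reach N (mscale k (inp N)) m -> reach N m (mscale k (outp N)).

Definition subsound (N : net) : Prop :=
  forall k k' (m' : marking), k' <= k ->
    reach N (mscale k (inp N)) (madd m' (mscale k' (outp N))) ->
    reach N m' (mscale (k - k') (outp N)).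

Definition disjoint_nodes (N M : net) : Prop :=
  forall x, ~ (node N x = true /\ node M x = true).

Definition subst (N : net) (p : nat) (M : net) : net := {|
  pl := fun x => (pl N x && negb (x =? p)) || pl M x;
  tr := fun x => tr N x || tr M x;
  fl := fun x y =>
          (fl N x y && negb (x =? p) && negb (y =? p))
       || fl M x y
       || (fl N x p && inp M y)
       || (outp M x && fl N p y);
  inp := fun x => if inp N p then (inp N x && negb (x =? p)) || inp M x
                  else inp N x;
  outp := fun x => if outp N p then (outp N x && negb (x =? p)) || outp M x
                   else outp N x
|}.

(* Let N0 in C be pWF but not sub-sound: k.I ->* m' + k'.O in N0
   (k' <= k) while m' does not reach (k-k').O.  If k = 0 this is impossible,
   since the empty marking is dead in a pWF net.  For k >= 1 we use the
   sub-sound "chain" net: a token walks along the places c_0, ..., c_2k, each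
   of the first k moves puts a token into a buffer place q and each of the
   last k moves takes one out.  Substituting N0 for q yields a net of C, hence
   a 1-sound net.  In it, the first k moves create k.I inside N0, N0 runs to
   m' + k'.O, and k' further moves consume k'.O, leaving the walker at c_(k+k')
   with m' inside N0.  Conversely every run from that marking to the final one
   interleaves N0-steps with the k-k' remaining moves, each of which removes
   one copy of O from N0; so m' ->* (k-k').O, a contradiction.

   Nodes are natural
   numbers, and the chain net is built above a bound B on the nodes of N0, so
   that the two nets are disjoint. *)

From Stdlib Require Import Arith Bool Relations Lia List Classical FunctionalExtensionality.

Ltac dec := repeat (match goal with
 | |- context [?a =? ?b] => destruct (Nat.eqb_spec a b)
 | |- context [?a <=? ?b] => destruct (Nat.leb_spec a b)
 | |- context [?a <? ?b] => destruct (Nat.ltb_spec a b)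
 | H : context [?a =? ?b] |- _ => destruct (Nat.eqb_spec a b)
 | H : context [?a <=? ?b] |- _ => destruct (Nat.leb_spec a b)
 | H : context [?a <? ?b] |- _ => destruct (Nat.ltb_spec a b)
 end; cbn [andb orb negb] in *; try (exfalso; lia)); try discriminate; try lia.

(** * Additivity of reachability *)

Lemma madd_comm (m1 m2 : marking) : madd m1 m2 = madd m2 m1.
Proof. apply functional_extensionality; intro; unfold madd; lia. Qed.

Lemma fire_madd (N : net) (t : nat) (a R : marking) :
  (forall p, fl N p t = true -> 1 <= a p) ->
  fire N t (madd a R) = madd (fire N t a) R.
Proof.
  intro H; apply functional_extensionality; intro x; unfold fire, madd.
  destruct (fl N x t) eqn:E; [specialize (H x E)|]; destruct (fl N t x); lia.
Qed.

Lemma fire_ext (N1 N2 : net) (t : nat) (m : marking) :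
  (forall x, fl N1 x t = fl N2 x t /\ fl N1 t x = fl N2 t x) ->
  fire N1 t m = fire N2 t m.
Proof.
  intro H; apply functional_extensionality; intro x; unfold fire.
  destruct (H x) as [-> ->]; auto.
Qed.

Lemma step_madd (N : net) (m1 m2 e : marking) :
  step N m1 m2 -> step N (madd m1 e) (madd m2 e).
Proof.
  intros [t [[Ht Hp] ->]]. exists t; split.
  - split; auto. intros p Hf; specialize (Hp p Hf); unfold madd; lia.
  - rewrite fire_madd; auto.
Qed.

Lemma reach_madd_r (N : net) (m1 m2 e : marking) :
  reach N m1 m2 -> reach N (madd m1 e) (madd m2 e).
Proof.
  induction 1.
  - apply rt_step, step_madd; auto.
  - apply rt_refl.
  - eapply rt_trans; eauto.
Qed.

Lemma reach_madd_l (N : net) (m1 m2 e : marking) :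
  reach N m1 m2 -> reach N (madd e m1) (madd e m2).
Proof. intro H; rewrite (madd_comm e m1), (madd_comm e m2); apply reach_madd_r; auto. Qed.

Definition single (x : nat) : marking := fun y => if y =? x then 1 else 0.

(** * The chain net

   For a base [B] and [k >= 1] the chain net has the places c_j = B+j
   (0 <= j <= 2k) and the buffer q = B+4k+1, and the transitions
   t_j = B+2k+1+j (0 <= j < 2k) moving a token from c_j to c_(j+1).  The
   transitions of the first half also produce a token in q, those of the
   second half also consume one from q. *)

Notation buffer B k := (B + 4*k + 1) (only parsing).

Definition chain (B k : nat) : net := {|
  pl := fun x => ((B <=? x) && (x <=? B+2*k)) || (x =? buffer B k);
  tr := fun x => (B+2*k <? x) && (x <=? B+4*k);
  fl := fun x y => ((B <=? x) && (x <? B+2*k) && (y =? x+2*k+1))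
    || ((B+2*k <? x) && (x <=? B+4*k) && (y + 2*k =? x))
    || ((x =? buffer B k) && (B+3*k <? y) && (y <=? B+4*k))
    || ((B+2*k <? x) && (x <=? B+3*k) && (y =? buffer B k));
  inp := fun x => x =? B;
  outp := fun x => x =? B+2*k |}.

Definition flow (N : net) : relation nat := clos_refl_trans nat (fun a b => fl N a b = true).

Lemma flow_edge (N : net) (a b : nat) : fl N a b = true -> flow N a b.
Proof. intro; apply rt_step; auto. Qed.

Lemma chain_flow_from_input (B k j : nat) : j <= 2*k -> flow (chain B k) B (B+j).
Proof.
  induction j; intro Hj.
  - replace (B+0) with B by lia; apply rt_refl.
  - eapply rt_trans. apply IHj; lia.
    eapply rt_trans. apply (flow_edge _ _ (B+2*k+S j)). simpl; dec.
    apply flow_edge; simpl; dec.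
Qed.

Lemma chain_flow_to_output (B k j : nat) : j <= 2*k -> flow (chain B k) (B+j) (B+2*k).
Proof.
  intros Hj. remember (2*k - j) as d. revert j Hj Heqd. induction d; intros j Hj Hd.
  - replace j with (2*k) by lia; apply rt_refl.
  - eapply rt_trans. apply (flow_edge _ _ (B+2*k+S j)). simpl; dec.
    eapply rt_trans. apply (flow_edge _ _ (B + S j)). simpl; dec.
    apply IHd; lia.
Qed.

Lemma chain_pWF (B k : nat) : 1 <= k -> pWF (chain B k).
Proof.
  intros Hk. unfold pWF; repeat split.
  - exists (B+4*k+2). intros x Hx. unfold node in Hx; simpl in Hx; dec.
  - intros x [H1 H2]. simpl in *. dec.
  - intros x y H. simpl in *. dec; auto.
  - intros x H; simpl in *; dec.
  - intros x H; simpl in *; dec.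
  - exists B; simpl; dec.
  - exists (B+2*k); simpl; dec.
  - intros x Hx. exists B; split. simpl; dec.
    unfold node in Hx; simpl in Hx.
    destruct ((B <=? x) && (x <=? B+2*k)) eqn:E1.
    + replace x with (B + (x - B)) by dec. apply chain_flow_from_input. dec.
    + destruct (x =? buffer B k) eqn:E2.
      * apply Nat.eqb_eq in E2; subst. eapply rt_trans. apply (chain_flow_from_input B k 0); lia.
        eapply rt_trans. apply (flow_edge _ _ (B+2*k+1)). simpl; dec. apply flow_edge; simpl; dec.
      * simpl in Hx. eapply rt_trans. apply (chain_flow_from_input B k (x - B - 2*k - 1)). dec.
        apply flow_edge; simpl; dec.
  - intros x Hx. exists (B+2*k); split. simpl; dec.
    unfold node in Hx; simpl in Hx.
    destruct ((B <=? x) && (x <=? B+2*k)) eqn:E1.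
    + replace x with (B + (x - B)) by dec. apply chain_flow_to_output. dec.
    + destruct (x =? buffer B k) eqn:E2.
      * apply Nat.eqb_eq in E2; subst.
        eapply rt_trans. apply (flow_edge _ _ (B+4*k)). simpl; dec. apply flow_edge; simpl; dec.
      * simpl in Hx. eapply rt_trans. apply (flow_edge _ _ (B + (x - B - 2*k))). simpl; dec.
        apply chain_flow_to_output; dec.
Qed.

(** * Sub-soundness of the chain net *)

(* Every marking reachable from k.I is a sum of "walkers": a walker at c_j
   (j <= 2k) is a token on c_j together with the min(j, 2k-j) tokens it has
   left in the buffer. *)
Definition walker (B k j : nat) : marking := fun x =>
  (if x =? B+j then 1 else 0) + (if x =? buffer B k then Nat.min j (2*k-j) else 0).

Definition walkers (B k : nat) (l : list nat) : marking :=
  fold_right (fun a m => madd (walker B k a) m) (fun _ => 0) l.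

Definition on_chain (k : nat) (l : list nat) : Prop := Forall (fun a => a <= 2*k) l.

Lemma on_chain_app_cons (k a : nat) (l1 l2 : list nat) :
  on_chain k (l1 ++ a :: l2) -> on_chain k (l1 ++ l2).
Proof.
  intro Hl; apply Forall_app in Hl as [H1 H2]; inversion H2; subst.
  apply Forall_app; split; auto.
Qed.

Lemma walker_fire (B k a : nat) : a < 2*k ->
  fire (chain B k) (B+2*k+S a) (walker B k a) = walker B k (S a).
Proof. intros Ha. apply functional_extensionality; intro x. unfold fire, walker; cbn [fl chain]. dec. Qed.

Lemma walker_enabled (B k a : nat) : 1 <= k -> a < 2*k ->
  enabled (chain B k) (B+2*k+S a) (walker B k a).
Proof. intros Hk Ha. split; [simpl; dec|]. intros p Hp. unfold walker. simpl in Hp. dec. Qed.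

Lemma walker_finish (B k a : nat) : 1 <= k -> a <= 2*k ->
  reach (chain B k) (walker B k a) (walker B k (2*k)).
Proof.
  intros Hk Ha. remember (2*k - a) as d. revert a Ha Heqd. induction d; intros a Ha Hd.
  - replace a with (2*k) by lia; apply rt_refl.
  - eapply rt_trans; [|apply (IHd (S a)); lia].
    apply rt_step. exists (B+2*k+S a). split.
    + apply walker_enabled; lia.
    + symmetry; apply walker_fire; lia.
Qed.

Lemma walkers_app_cons (B k a : nat) (l1 l2 : list nat) :
  walkers B k (l1 ++ a :: l2) = madd (walker B k a) (walkers B k (l1 ++ l2)).
Proof.
  induction l1; simpl; auto. rewrite IHl1.
  apply functional_extensionality; intro; unfold madd; lia.
Qed.

Lemma walkers_occupied (B k j : nat) (l : list nat) :
  1 <= walkers B k l (B+j) -> j <> 4*k+1 -> In j l.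
Proof.
  induction l; simpl; intros H Hj. lia.
  unfold madd, walker at 1 in H. dec. right. apply IHl; auto; lia.
Qed.

Lemma walkers_step (B k : nat) (l : list nat) (m : marking) :
  1 <= k -> on_chain k l -> step (chain B k) (walkers B k l) m ->
  exists l', m = walkers B k l' /\ length l' = length l /\ on_chain k l'.
Proof.
  intros Hk Hl [t [[Ht Hp] ->]].
  assert (Hti : exists i, t = B + 2*k + S i /\ i < 2*k)
    by (simpl in Ht; dec; exists (t - B - 2*k - 1); lia).
  destruct Hti as [i [-> Hi]].
  assert (Hin : In i l) by (apply (walkers_occupied B k); [apply Hp; simpl; dec|lia]).
  destruct (in_split _ _ Hin) as [l1 [l2 ->]].
  exists (l1 ++ S i :: l2). rewrite !walkers_app_cons. split; [|split].
  - rewrite fire_madd, walker_fire; auto.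
    intros p Hf; unfold walker; simpl in Hf; dec.
  - rewrite !length_app; simpl; lia.
  - apply on_chain_app_cons in Hl. apply Forall_app in Hl as [H1 H2].
    apply Forall_app; split; auto.
Qed.

Lemma walkers_reach (B k : nat) (m1 m2 : marking) : 1 <= k -> reach (chain B k) m1 m2 ->
  forall l, m1 = walkers B k l -> on_chain k l ->
  exists l', m2 = walkers B k l' /\ length l' = length l /\ on_chain k l'.
Proof.
  intros Hk; induction 1; intros l E Hl; subst.
  - eapply walkers_step; eauto.
  - eauto.
  - destruct (IHclos_refl_trans1 l eq_refl Hl) as [l1 [E1 [L1 F1]]].
    destruct (IHclos_refl_trans2 l1 E1 F1) as [l2 [E2 [L2 F2]]].
    exists l2; repeat split; auto; lia.
Qed.

Lemma walkers_initial (B k K : nat) : mscale K (inp (chain B k)) = walkers B k (repeat 0 K).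
Proof.
  induction K; simpl; apply functional_extensionality; intro x; unfold mscale; simpl.
  - destruct (x =? B); auto.
  - rewrite <- IHK. unfold madd, walker, mscale; simpl. dec.
Qed.

(* A token on the output place belongs to a finished walker, which can be
   split off; repeated n times this splits off n.O. *)
Lemma walkers_split_output (B k n : nat) : forall l m, on_chain k l ->
  madd m (mscale n (outp (chain B k))) = walkers B k l ->
  exists l2, m = walkers B k l2 /\ length l2 + n = length l /\ on_chain k l2.
Proof.
  induction n; intros l m Hl E.
  - exists l; split; auto. rewrite <- E. apply functional_extensionality; intro x.
    unfold madd, mscale. destruct (outp _ x); lia.
  - destruct (IHn l (madd m (walker B k (2*k))) Hl) as [l1 [E1 [L1 F1]]].
    { rewrite <- E. apply functional_extensionality; intro x.
      unfold madd, mscale, walker; simpl. dec. }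
    assert (Hin : In (2*k) l1).
    { apply (walkers_occupied B k); [|lia]. rewrite <- E1. unfold madd, walker. dec. }
    destruct (in_split _ _ Hin) as [l2 [l3 ->]].
    exists (l2 ++ l3). rewrite walkers_app_cons in E1. split; [|split].
    + apply functional_extensionality; intro x. apply (f_equal (fun f => f x)) in E1.
      unfold madd in E1. lia.
    + rewrite length_app in *; simpl in L1; lia.
    + apply (on_chain_app_cons k (2*k)); auto.
Qed.

Lemma walkers_finish (B k : nat) (l : list nat) : 1 <= k -> on_chain k l ->
  reach (chain B k) (walkers B k l) (mscale (length l) (outp (chain B k))).
Proof.
  intros Hk; induction l; intros Hl; simpl.
  - replace (mscale 0 _) with (fun _ : nat => 0). apply rt_refl.
    apply functional_extensionality; intro x; unfold mscale; simpl; destruct (_ =? _); auto.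
  - inversion Hl; subst. eapply rt_trans.
    + apply reach_madd_r. apply walker_finish; eauto.
    + replace (mscale (S (length l)) _)
        with (madd (walker B k (2*k)) (mscale (length l) (outp (chain B k)))).
      * apply reach_madd_l; auto.
      * apply functional_extensionality; intro x. unfold madd, mscale, walker; simpl. dec.
Qed.

Lemma chain_subsound (B k : nat) : 1 <= k -> subsound (chain B k).
Proof.
  intros Hk K k' m' Hle Hr.
  rewrite walkers_initial in Hr.
  destruct (walkers_reach B k _ _ Hk Hr (repeat 0 K) eq_refl) as [l [E [L F]]].
  { apply Forall_forall; intros x Hx; apply repeat_spec in Hx; lia. }
  rewrite repeat_length in L.
  destruct (walkers_split_output B k k' l m' F E) as [l2 [-> [L2 F2]]].
  replace (K - k') with (length l2) by lia. apply walkers_finish; auto.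
Qed.

(** * Plugging a net into the buffer of the chain net *)

(* All nodes and arcs of [N] lie strictly below [B], and input and output
   places are no transitions; so the chain net placed at [B] is disjoint
   from [N]. *)
Definition below (N : net) (B : nat) : Prop :=
  (forall x y, fl N x y = true -> x < B /\ y < B) /\
  (forall x, inp N x = true -> x < B /\ tr N x = false) /\
  (forall x, outp N x = true -> x < B /\ tr N x = false) /\
  (forall x, node N x = true -> x < B).

Lemma pWF_below (N : net) : pWF N -> exists B, below N B.
Proof.
  intros [[b Hb] [Hd [Hf [Hi [Ho _]]]]]. exists b. unfold node in *. repeat split.
  - destruct (Hf _ _ H) as [[A _]|[A _]]; apply Hb; rewrite A; auto using orb_true_r.
  - destruct (Hf _ _ H) as [[_ A]|[_ A]]; apply Hb; rewrite A; auto using orb_true_r.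
  - apply Hb. rewrite Hi; auto.
  - destruct (tr N x) eqn:E; auto. exfalso; apply (Hd x); auto.
  - apply Hb. rewrite Ho; auto.
  - destruct (tr N x) eqn:E; auto. exfalso; apply (Hd x); auto.
  - auto.
Qed.

Definition low (B : nat) (m : marking) : Prop := forall x, B <= x -> m x = 0.

Lemma reach_low (N : net) (B : nat) (m1 m2 : marking) :
  below N B -> reach N m1 m2 -> low B m1 -> low B m2.
Proof.
  intros [Hfl _]. induction 1; intros Z; auto.
  destruct H as [t [_ ->]]. intros z Hz. unfold fire. rewrite (Z z Hz).
  destruct (fl N z t) eqn:E1; try (apply Hfl in E1; lia);
  destruct (fl N t z) eqn:E2; try (apply Hfl in E2; lia); lia.
Qed.

(* The chain net at base [B] with the net [N0] substituted for its buffer.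
   Its first-half transitions feed the inputs of [N0], its second-half
   transitions consume from the outputs of [N0]. *)
Definition plugged (N0 : net) (B k : nat) : net := subst (chain B k) (buffer B k) N0.

Lemma chain_disjoint (N0 : net) (B k : nat) : below N0 B -> disjoint_nodes (chain B k) N0.
Proof.
  intros [_ [_ [_ Hn]]] x [A1 A2]. specialize (Hn x A2).
  unfold node in A1; simpl in A1; dec.
Qed.

Ltac split_inner Hfl Hin Hout :=
  repeat match goal with
  | |- context [fl ?N ?a ?b] => is_var N; let E := fresh "E" in
      destruct (fl N a b) eqn:E; [apply Hfl in E; destruct E|]
  | |- context [inp ?N ?a] => is_var N; let E := fresh "E" in
      destruct (inp N a) eqn:E; [apply Hin in E; destruct E|]
  | |- context [outp ?N ?a] => is_var N; let E := fresh "E" in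
      destruct (outp N a) eqn:E; [apply Hout in E; destruct E|]
  end.

Lemma plugged_arcs_inner (N0 : net) (B k t : nat) : below N0 B -> tr N0 t = true ->
  forall x, fl (plugged N0 B k) x t = fl N0 x t /\ fl (plugged N0 B k) t x = fl N0 t x.
Proof.
  intros [Hfl [Hin [Hout Hn]]] Ht x.
  assert (tB : t < B) by (apply Hn; unfold node; rewrite Ht; apply orb_true_r).
  unfold plugged, subst; cbn [fl inp outp tr pl chain].
  split; split_inner Hfl Hin Hout; try congruence; dec.
Qed.

Lemma plugged_arcs_first (N0 : net) (B k j : nat) : below N0 B -> j < k -> forall x,
  fl (plugged N0 B k) x (B+2*k+S j) = (x =? B+j) /\
  fl (plugged N0 B k) (B+2*k+S j) x = ((x =? B+S j) || inp N0 x).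
Proof.
  intros [Hfl [Hin [Hout Hn]]] Hj x.
  unfold plugged, subst; cbn [fl inp outp tr pl chain].
  split; split_inner Hfl Hin Hout; dec.
Qed.

Lemma plugged_arcs_second (N0 : net) (B k j : nat) : below N0 B -> k <= j -> j < 2*k ->
  forall x,
  fl (plugged N0 B k) x (B+2*k+S j) = ((x =? B+j) || outp N0 x) /\
  fl (plugged N0 B k) (B+2*k+S j) x = (x =? B+S j).
Proof.
  intros [Hfl [Hin [Hout Hn]]] Hj Hj2 x.
  unfold plugged, subst; cbn [fl inp outp tr pl chain].
  split; split_inner Hfl Hin Hout; dec.
Qed.

Lemma plugged_transitions (N0 : net) (B k t : nat) : tr (plugged N0 B k) t = true ->
  tr N0 t = true \/ exists i, t = B+2*k+S i /\ i < 2*k.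
Proof.
  unfold plugged, subst; cbn [tr chain]. intro H. destruct (tr N0 t); auto. right.
  rewrite orb_false_r in H. dec. exists (t - B - 2*k - 1); lia.
Qed.

Lemma plugged_initial (N0 : net) (B k : nat) : below N0 B ->
  mscale 1 (inp (plugged N0 B k)) = single B.
Proof.
  intros [_ [Hin _]]. apply functional_extensionality; intro x.
  unfold mscale, single, plugged, subst; cbn [inp chain].
  destruct (inp N0 x) eqn:E; [apply Hin in E; destruct E|]; dec.
Qed.

Lemma plugged_final (N0 : net) (B k : nat) : below N0 B ->
  mscale 1 (outp (plugged N0 B k)) = single (B+2*k).
Proof.
  intros [_ [_ [Hout _]]]. apply functional_extensionality; intro x.
  unfold mscale, single, plugged, subst; cbn [outp chain].
  destruct (outp N0 x) eqn:E; [apply Hout in E; destruct E|]; dec.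
Qed.

(** * Forward simulation: a run of [N0] yields a run of the plugged net *)

Lemma reach_plugged_inner (N0 : net) (B k : nat) (m1 m2 : marking) :
  below N0 B -> reach N0 m1 m2 -> reach (plugged N0 B k) m1 m2.
Proof.
  intros Hb; induction 1.
  - destruct H as [t [[Ht Hp] ->]]. apply rt_step. exists t; split.
    + split. unfold plugged, subst; cbn [tr]; rewrite Ht; apply orb_true_r.
      intros p Hf. apply Hp. rewrite <- (proj1 (plugged_arcs_inner N0 B k t Hb Ht p)); auto.
    + symmetry; apply fire_ext. apply plugged_arcs_inner; auto.
  - apply rt_refl.
  - eapply rt_trans; eauto.
Qed.

Lemma plugged_first_half (N0 : net) (B k j : nat) : below N0 B -> j <= k ->
  reach (plugged N0 B k) (single B) (madd (single (B+j)) (mscale j (inp N0))).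
Proof.
  intros Hb; induction j; intro Hj.
  - replace (madd _ _) with (single B). apply rt_refl.
    apply functional_extensionality; intro x. unfold madd, single, mscale.
    destruct (inp N0 x); dec.
  - eapply rt_trans. apply IHj; lia. apply rt_step.
    exists (B+2*k+S j). split. split.
    + unfold plugged, subst; cbn [tr chain]. dec.
    + intros p Hp. rewrite (proj1 (plugged_arcs_first N0 B k j Hb ltac:(lia) p)) in Hp.
      apply Nat.eqb_eq in Hp; subst. unfold madd, single. dec.
    + apply functional_extensionality; intro x. unfold fire.
      destruct (plugged_arcs_first N0 B k j Hb ltac:(lia) x) as [-> ->].
      destruct Hb as [_ [Hin _]]. unfold madd, single, mscale.
      destruct (inp N0 x) eqn:E; [apply Hin in E; destruct E|]; dec.
Qed.

Lemma plugged_second_half (N0 : net) (B k n : nat) : below N0 B ->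
  forall j R, k <= j -> j + n <= 2*k ->
  reach (plugged N0 B k) (madd (single (B+j)) (madd (mscale n (outp N0)) R))
                         (madd (single (B+(j+n))) R).
Proof.
  intros Hb; induction n; intros j R Hj Hjn.
  - replace (j+0) with j by lia. replace (madd (mscale 0 (outp N0)) R) with R. apply rt_refl.
    apply functional_extensionality; intro x; unfold madd, mscale; destruct (outp N0 x); lia.
  - eapply rt_trans; [|replace (j + S n) with (S j + n) by lia; apply IHn; lia].
    apply rt_step. exists (B+2*k+S j). split. split.
    + unfold plugged, subst; cbn [tr chain]. dec.
    + intros p Hp. rewrite (proj1 (plugged_arcs_second N0 B k j Hb ltac:(lia) ltac:(lia) p)) in Hp.
      unfold madd, single, mscale. apply orb_true_iff in Hp as [Hp|Hp].
      * apply Nat.eqb_eq in Hp; subst. dec.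
      * rewrite Hp. lia.
    + apply functional_extensionality; intro x. unfold fire.
      destruct (plugged_arcs_second N0 B k j Hb ltac:(lia) ltac:(lia) x) as [-> ->].
      destruct Hb as [_ [_ [Hout _]]]. unfold madd, single, mscale.
      destruct (outp N0 x) eqn:E; [apply Hout in E; destruct E|]; dec.
Qed.

Lemma plugged_forward (N0 : net) (B k k' : nat) (m' : marking) : below N0 B -> k' <= k ->
  reach N0 (mscale k (inp N0)) (madd m' (mscale k' (outp N0))) ->
  reach (plugged N0 B k) (single B) (madd (single (B+(k+k'))) m').
Proof.
  intros Hb Hk' Hr.
  eapply rt_trans; [apply (plugged_first_half N0 B k k Hb); lia|].
  eapply rt_trans; [apply reach_madd_l, reach_plugged_inner, Hr; exact Hb|].
  rewrite (madd_comm m'). apply plugged_second_half; auto; lia.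
Qed.

(** * Backward simulation: once the walker is in the second half, runs of the
    plugged net are runs of [N0] interleaved with moves consuming O *)

Lemma plugged_step_inner (N0 : net) (B k j t : nat) (m m1 : marking) :
  below N0 B -> low B m -> tr N0 t = true ->
  enabled (plugged N0 B k) t (madd (single (B+j)) m) ->
  m1 = fire (plugged N0 B k) t (madd (single (B+j)) m) ->
  step N0 m (fire N0 t m) /\ m1 = madd (single (B+j)) (fire N0 t m).
Proof.
  intros Hb Hm Ht [_ Hp] ->.
  assert (Hen : forall p, fl N0 p t = true -> 1 <= m p).
  { intros p Hf. pose proof (proj1 Hb _ _ Hf) as [HpB _].
    rewrite <- (proj1 (plugged_arcs_inner N0 B k t Hb Ht p)) in Hf.
    specialize (Hp p Hf). unfold madd, single in Hp. dec. }
  split; [exists t; split; [split|]; auto|].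
  rewrite (fire_ext _ N0) by (apply plugged_arcs_inner; auto).
  rewrite !(madd_comm (single (B+j))). apply fire_madd; auto.
Qed.

Lemma plugged_step_chain (N0 : net) (B k j i : nat) (m m1 : marking) :
  below N0 B -> low B m -> k <= j -> i < 2*k ->
  enabled (plugged N0 B k) (B+2*k+S i) (madd (single (B+j)) m) ->
  m1 = fire (plugged N0 B k) (B+2*k+S i) (madd (single (B+j)) m) ->
  i = j /\ exists m2, m = madd m2 (mscale 1 (outp N0)) /\ m1 = madd (single (B+S j)) m2.
Proof.
  intros Hb Hm Hj Hi [_ Hp] ->.
  assert (Eij : i = j).
  { assert (Hfl : fl (plugged N0 B k) (B+i) (B+2*k+S i) = true).
    { destruct (Nat.lt_ge_cases i k).
      - rewrite (proj1 (plugged_arcs_first N0 B k i Hb H (B+i))). dec.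
      - rewrite (proj1 (plugged_arcs_second N0 B k i Hb H Hi (B+i))). dec. }
    specialize (Hp _ Hfl). unfold madd, single in Hp. rewrite (Hm (B+i)) in Hp by lia. dec. }
  subst i. split; auto.
  pose proof Hb as [_ [_ [Hout _]]].
  assert (HO : forall x, outp N0 x = true -> 1 <= m x).
  { intros x Ex. pose proof (Hout x Ex) as [xB _].
    assert (Hf : fl (plugged N0 B k) x (B+2*k+S j) = true).
    { rewrite (proj1 (plugged_arcs_second N0 B k j Hb Hj Hi x)), Ex. apply orb_true_r. }
    specialize (Hp _ Hf). unfold madd, single in Hp. dec. }
  exists (fun x => m x - (if outp N0 x then 1 else 0)). split.
  - apply functional_extensionality; intro x. unfold madd, mscale.
    destruct (outp N0 x) eqn:E; [specialize (HO x E)|]; lia.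
  - apply functional_extensionality; intro x. unfold fire.
    destruct (plugged_arcs_second N0 B k j Hb Hj Hi x) as [-> ->].
    unfold madd, single.
    destruct (outp N0 x) eqn:E; [pose proof (Hout x E) as [xB _]; specialize (HO x E)|]; dec.
Qed.

Lemma plugged_backward (N0 : net) (B k : nat) : below N0 B ->
  forall X Y, clos_refl_trans_1n marking (step (plugged N0 B k)) X Y ->
  forall j m, X = madd (single (B+j)) m -> low B m -> k <= j -> j <= 2*k ->
  Y = single (B+2*k) -> reach N0 m (mscale (2*k - j) (outp N0)).
Proof.
  intros Hb X Y H. induction H as [X|X X1 Y Hs Hr IH]; intros j m -> Hm Hj1 Hj2 EY.
  - assert (Ej : j = 2*k).
    { apply (f_equal (fun f => f (B+j))) in EY. unfold madd, single in EY.
      rewrite (Hm (B+j)) in EY by lia. dec. }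
    subst j. replace m with (mscale (2*k - 2*k) (outp N0)); [apply rt_refl|].
    apply functional_extensionality; intro x. apply (f_equal (fun f => f x)) in EY.
    unfold madd, single, mscale in *. replace (2*k - 2*k) with 0 by lia.
    destruct (outp N0 x); dec.
  - destruct Hs as [t [Hen EX1]].
    destruct (plugged_transitions N0 B k t (proj1 Hen)) as [Ht|[i [-> Hi]]].
    + destruct (plugged_step_inner N0 B k j t m X1 Hb Hm Ht Hen EX1) as [Hstep ->].
      eapply rt_trans; [apply rt_step, Hstep|].
      apply (IH j); auto. eapply reach_low; eauto. apply rt_step, Hstep.
    + destruct (plugged_step_chain N0 B k j i m X1 Hb Hm Hj1 Hi Hen EX1)
        as [-> [m2 [-> ->]]].
      replace (mscale (2*k - j) (outp N0))
        with (madd (mscale (2*k - S j) (outp N0)) (mscale 1 (outp N0))).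
      * apply reach_madd_r, (IH (S j)); auto; try lia.
        intros x Hx. specialize (Hm x Hx). unfold madd in Hm. lia.
      * apply functional_extensionality; intro x. unfold madd, mscale.
        destruct (outp N0 x); lia.
Qed.

(* If the plugged net is 1-sound, then k.I ->* m' + k'.O in [N0] implies
   m' ->* (k-k').O: lift the run forward, apply 1-soundness, and project the
   completing run back to [N0]. *)
Lemma plugged_transfers (N0 : net) (B k k' : nat) (m' : marking) :
  below N0 B -> k' <= k -> ksound 1 (plugged N0 B k) ->
  reach N0 (mscale k (inp N0)) (madd m' (mscale k' (outp N0))) ->
  reach N0 m' (mscale (k - k') (outp N0)).
Proof.
  intros Hb Hk' Hs Hr.
  assert (Hm' : low B m').
  { intros x Hx. assert (Hlow : low B (madd m' (mscale k' (outp N0)))).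
    { apply (reach_low N0 B _ _ Hb Hr). intros y Hy. unfold mscale.
      destruct (inp N0 y) eqn:E; auto. apply (proj1 (proj2 Hb)) in E. lia. }
    specialize (Hlow x Hx). unfold madd in Hlow. lia. }
  assert (Hfin : reach (plugged N0 B k) (madd (single (B+(k+k'))) m') (single (B+2*k))).
  { rewrite <- (plugged_final N0 B k Hb). apply Hs.
    rewrite (plugged_initial N0 B k Hb). apply plugged_forward; auto. }
  apply clos_rt_rt1n in Hfin.
  replace (k - k') with (2*k - (k+k')) by lia.
  eapply plugged_backward; eauto; lia.
Qed.

(* In a pWF net every transition has an input place (it is reachable from an
   input place), so nothing can fire from the empty marking. *)
Lemma empty_dead (N : net) (m : marking) : pWF N -> reach N (fun _ => 0) m -> m = (fun _ => 0).
Proof.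
  intros HW Hr. remember (fun _ : nat => 0) as z eqn:Ez. induction Hr; subst; auto.
  - destruct H as [t [[Ht Hp] _]]. exfalso.
    destruct HW as [_ [Hd [_ [Hip [_ [_ [_ [Hreach _]]]]]]]].
    destruct (Hreach t) as [i [Hi Rit]]; [unfold node; rewrite Ht; apply orb_true_r|].
    apply clos_rt_rtn1 in Rit. inversion Rit; subst.
    + apply (Hd t); split; auto.
    + specialize (Hp _ H). lia.
  - rewrite IHHr1 in IHHr2 by auto. auto.
Qed.

Lemma subsound_violation (N : net) : ~ subsound N ->
  exists k k' m', k' <= k /\ reach N (mscale k (inp N)) (madd m' (mscale k' (outp N))) /\
                  ~ reach N m' (mscale (k - k') (outp N)).
Proof.
  intro Hns. apply NNPP. intro Hno. apply Hns. intros k k' m' Hle Hr.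
  apply NNPP. intro Hnr. apply Hno. exists k, k', m'. auto.
Qed.

Theorem mainTheorem5 :
  ~ exists C : net -> Prop,
      (forall N, C N -> pWF N) /\
      (forall N, pWF N -> subsound N -> C N) /\
      (exists N, C N /\ ~ subsound N) /\
      (forall N, C N -> ksound 1 N) /\
      (forall N M p, C N -> C M -> disjoint_nodes N M -> pl N p = true ->
                     C (subst N p M)).
Proof.
  intros [C [HpWF [Hsub [[N0 [HC0 Hns]] [Hsound Hsubst]]]]].
  destruct (subsound_violation N0 Hns) as [k [k' [m' [Hle [Hr Hnr]]]]].
  destruct (pWF_below N0 (HpWF N0 HC0)) as [B Hb].
  destruct (Nat.eq_dec k 0) as [->|Hk].
  - (* k = 0: the run starts from the empty marking, which is dead. *)
    apply Hnr. replace k' with 0 in * by lia.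
    assert (Hempty : mscale 0 (inp N0) = (fun _ => 0)).
    { apply functional_extensionality; intro x; unfold mscale; destruct (inp N0 x); auto. }
    rewrite Hempty in Hr. apply empty_dead in Hr; [|apply HpWF; auto].
    replace m' with (mscale 0 (outp N0)); [apply rt_refl|].
    apply functional_extensionality; intro x. apply (f_equal (fun f => f x)) in Hr.
    unfold madd, mscale in *. destruct (outp N0 x); lia.
  - (* k >= 1: plug N0 into the buffer of the sub-sound chain net. *)
    assert (Hchain : C (chain B k)) by (apply Hsub; [apply chain_pWF|apply chain_subsound]; lia).
    assert (Hplugged : C (plugged N0 B k)).
    { apply Hsubst; auto using chain_disjoint. simpl; dec. }
    apply Hnr, (plugged_transfers N0 B k k'); auto.
Qed.
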